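(* There exists an absolute constant $\xi>0$ such that for every $\rho<\xi$: if $T$ is an $\alpha$-approximate integral solution of the MMDA instance $G^{(\rho)}_{n,\ell}$, then $\alpha\ge n^{\Omega(1/\ell)}$.
   Context: MMDA: an $\alpha$-approximate integral solution of a layered instance with source $s$, sinks $L_\ell$ and required out-degrees $k_u$ is $T\subseteq E$ with $|\delta_T^+(s)|\ge k_s/\alpha$, every vertex of in-degree at most $1$ in $T$, and $|\delta^+_T(v)|\ge k_v/\alpha$ for every non-sink $v\ne s$ of in-degree $1$ in $T$. The instance $G^{(\rho)}_{n,\ell}$: integers $m$ and $1/\epsilon$ with $\epsilon\rho m\in\mathbb N$, $\ell=3/\epsilon$, $\epsilon m=\omega(\log m)$ (when $\ell=3$, $\epsilon=1$); ground set $[m]$. Each vertex $v$ has a label $S_v\subseteq[m]$: $L_0=\{s\}$ with $S_s=\emptyset$; for $1\le i<2/\epsilon$, $L_i$ has one vertex per subset of size $i\epsilon\rho m$; for $2/\epsilon\le i\le3/\epsilon$, one vertex per subset of size $(4-i\epsilon)\rho m$. For $u\in L_{i-1},v\in L_i$, edge $(u,v)$ iff $S_u\subseteq S_v$ ($i\le 2/\epsilon$) or $S_v\subseteq S_u$ ($i>2/\epsilon$). Sinks: $L_{3/\epsilon}$. With $\delta_i^+$ the out-degree of vertices in $L_i$, $k_v=\gamma_i\delta^+_i$ for $v\in L_i$, $i<\ell$, where $\gamma_i=\gamma'_1$ ($0\le i<1/\epsilon$), $\gamma'_2$ ($1/\epsilon\le i<2/\epsilon$), $\gamma'_3$ ($2/\epsilon\le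 i<3/\epsilon$), $\gamma'_1=\frac{(\epsilon\rho m)!}{((\rho m)!\binom{(1-\rho)m}{\rho m})^{\epsilon}}$, $\gamma'_2=\frac{(\epsilon\rho m)!}{((\rho m)!\binom{2\rho m}{\rho m})^{\epsilon}}$, $\gamma'_3=\frac{(\epsilon\rho m)!}{((\rho m)!)^{\epsilon}}$. $n$ is the number of vertices, $n=2^{\Theta(m)}$. *)

From Stdlib Require Import Reals.
From mathcomp Require Import all_boot.
Set Implicit Arguments. Unset Strict Implicit. Unset Printing Implicit Defensive.

(* Parameters of G^(rho)_{n,l}: t = 1/eps (so l = 3t), m = size of ground set,
   q = eps*rho*m (a natural number), hence rho*m = t*q.                      *)

Definition lsize (t q i : nat) : nat :=
  if (i < 2 * t)%N then (i * q)%N else ((4 * t - i) * q)%N.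

Definition V (t m : nat) := ('I_(3 * t).+1 * {set 'I_m})%type.

Definition is_vertex (t m q : nat) (v : V t m) : bool :=
  #|v.2| == lsize t q v.1.

Definition is_edge (t m q : nat) (u v : V t m) : bool :=
  [&& is_vertex q u, is_vertex q v, (nat_of_ord v.1 == (nat_of_ord u.1).+1)
   & (if (nat_of_ord v.1 <= 2 * t)%N then u.2 \subset v.2 else v.2 \subset u.2)].

Definition nverts (t m q : nat) : nat := #|[pred v : V t m | is_vertex q v]|.

Definition src (t m : nat) : V t m := (ord0, set0).

Definition is_sink (t m : nat) (v : V t m) : bool := nat_of_ord v.1 == (3 * t)%N.

Definition Goutdeg (t m q : nat) (u : V t m) : nat :=
  #|[pred w : V t m | is_edge q u w]|.

Definition outdegT (t m : nat) (T : {set V t m * V t m}) (v : V t m) : nat :=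
  #|[set e in T | e.1 == v]|.
Definition indegT (t m : nat) (T : {set V t m * V t m}) (v : V t m) : nat :=
  #|[set e in T | e.2 == v]|.

Open Scope R_scope.

(* gamma'_1, gamma'_2, gamma'_3 ; x^eps = x^(1/t) *)
Definition gam1 (t m q : nat) : R :=
  INR (q`!) / Rpower (INR ((t * q)`! * 'C(m - t * q, t * q))) (/ INR t).
Definition gam2 (t q : nat) : R :=
  INR (q`!) / Rpower (INR ((t * q)`! * 'C(2 * (t * q), t * q))) (/ INR t).
Definition gam3 (t q : nat) : R :=
  INR (q`!) / Rpower (INR ((t * q)`!)) (/ INR t).

Definition gamma (t m q i : nat) : R :=
  if (i < t)%N then gam1 t m q else if (i < 2 * t)%N then gam2 t q else gam3 t q.

Definition kreq (t m q : nat) (v : V t m) : R :=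
  gamma t m q v.1 * INR (Goutdeg q v).

Definition approx_sol (t m q : nat) (alpha : R) (T : {set V t m * V t m}) : Prop :=
  (forall e, e \in T -> is_edge q e.1 e.2) /\
  kreq q (src t m) / alpha <= INR (outdegT T (src t m)) /\
  (forall v : V t m, (indegT T v <= 1)%N) /\
  (forall v : V t m, is_vertex q v -> ~~ is_sink v -> v <> src t m ->
     indegT T v = 1%N -> kreq q v / alpha <= INR (outdegT T v)).

(* In-degrees in T are at most one, so the T-descendants of distinct children of a
   vertex are disjoint, and a vertex of layer i that T reaches has at least
   prod_j k_j / alpha descendants d layers further down.  Let K = t q = rho m and pick a
   vertex A of layer t reached from s; its label a has K elements.  Below A lie at least
   C(m-K,K) / alpha^(2t) sinks, and below each vertex B of layer 2t under A at least
   C(2K,K) / alpha^t sinks, all of them K-subsets of the 2K-set S_B containing a.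
   At most (9^K / 8^(K-K/16))^2 K-subsets of S_B meet a in at most K/16 points.  If this
   exceeds C(2K,K) / (2 alpha^t) >= 2^K / (2 alpha^t), then alpha^t >= 2^(Omega(K)).
   Otherwise at least half of the sinks below A are K-sets meeting a in more than K/16
   points; there are at most 2^K C(m-K,K) (K / (m-2K+1))^(K/16) of those, and since
   m >= 2^18 K this again forces alpha^(2t) >= 2^(Omega(K)).  As n <= 2^(O(m)) and
   K = rho m, alpha >= n^(Omega(1/t)). *)

From Stdlib Require Import Reals Lra Lia.
From mathcomp Require Import all_boot zify.
Set Implicit Arguments. Unset Strict Implicit. Unset Printing Implicit Defensive.
Open Scope R_scope.

Section Branching.
Local Open Scope nat_scope.
Variables (t m q : nat) (T : {set V t m * V t m}).
Hypothesis T_edge : forall e, e \in T -> is_edge q e.1 e.2.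
Hypothesis T_indeg : forall v : V t m, indegT T v <= 1.

Fixpoint descendants (n : nat) (v : V t m) : {set V t m} :=
  if n is n'.+1 then \bigcup_(c : V t m | (v, c) \in T) descendants n' c else [set v].

(* The vertices on which approx_sol imposes an out-degree bound (sinks aside). *)
Definition in_tree (v : V t m) := is_vertex q v /\ (v = src t m \/ indegT T v = 1).

Lemma T_edgeP e : e \in T ->
  [/\ is_vertex q e.1, is_vertex q e.2, nat_of_ord e.2.1 = e.1.1.+1 &
      if e.2.1 <= 2 * t then e.1.2 \subset e.2.2 else e.2.2 \subset e.1.2].
Proof. by move/T_edge/and4P => [? ? /eqP ? ?]. Qed.

Lemma T_parent_uniq u w c : (u, c) \in T -> (w, c) \in T -> u = w.
Proof.
move=> uc wc; have /card_le1_eqP/(_ (u, c) (w, c)) := T_indeg c.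
by rewrite !inE uc wc eqxx => /(_ isT isT) [].
Qed.

Lemma descendants_root_uniq n c1 c2 x :
  x \in descendants n c1 -> x \in descendants n c2 -> c1 = c2.
Proof.
elim: n c1 c2 => [|n IHn] c1 c2 /=; first by rewrite !inE => /eqP -> /eqP.
move=> /bigcupP [d1 c1d1 xd1] /bigcupP [d2 c2d2 xd2].
by move: c2d2; rewrite -(IHn _ _ xd1 xd2) => /(T_parent_uniq c1d1).
Qed.

Lemma disjoint_children n v c1 c2 : c1 != c2 ->
  [disjoint (if (v, c1) \in T then descendants n c1 else set0) &
            (if (v, c2) \in T then descendants n c2 else set0)].
Proof.
move=> /eqP c12; rewrite -setI_eq0; apply/eqP/setP => x; rewrite !inE.
case: ifP => _; last by rewrite inE.
case: ifP => _; last by rewrite inE andbF.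
by apply/negP => /andP [x1 x2]; exact/c12/(descendants_root_uniq x1 x2).
Qed.

Lemma big_descendantsD a b v (E : V t m -> nat) :
  \sum_(x in descendants (a + b) v) E x =
  \sum_(w in descendants a v) \sum_(x in descendants b w) E x.
Proof.
elim: a v => [|a IHa] v; first by rewrite add0n big_set1.
rewrite addSn /= !(big_mkcond (fun c => (v, c) \in T)) /=.
rewrite !(partition_disjoint_bigcup _ _ (@disjoint_children _ v)).
by apply: eq_bigr => c _; case: ifP => _; rewrite ?big_set0 // IHa.
Qed.

Lemma card_descendantsD a b v :
  #|descendants (a + b) v| = \sum_(w in descendants a v) #|descendants b w|.
Proof.
by rewrite -sum1_card big_descendantsD; apply: eq_bigr => w _; rewrite sum1_card.
Qed.

Lemma card_descendants_predD a b v (P : pred (V t m)) :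
  #|[set x in descendants (a + b) v | P x]| =
  \sum_(w in descendants a v) #|[set x in descendants b w | P x]|.
Proof.
have card_sum S : #|[set x in S | P x]| = \sum_(x in S) (if P x then 1 else 0).
  by rewrite -sum1dep_card big_mkcondr.
by rewrite card_sum big_descendantsD; apply: eq_bigr => w _; rewrite card_sum.
Qed.

Lemma descendants_layer n (v x : V t m) : x \in descendants n v -> nat_of_ord x.1 = v.1 + n.
Proof.
elim: n v => [|n IHn] v /=; first by rewrite inE addn0 => /eqP ->.
case/bigcupP => c /T_edgeP [_ _ /= vc _] /IHn ->.
by rewrite vc addSnnS.
Qed.

Lemma descendants_same_layer n (v x y : V t m) :
  x \in descendants n v -> y \in descendants n v -> x.1 = y.1.
Proof.
move=> /descendants_layer x_layer /descendants_layer y_layer.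
by apply: val_inj; rewrite /= x_layer y_layer.
Qed.

Lemma descendants_label_sup n (v x : V t m) :
  v.1 + n <= 2 * t -> x \in descendants n v -> v.2 \subset x.2.
Proof.
elim: n v => [|n IHn] v /=; first by rewrite inE => _ /eqP ->.
move=> le_vn /bigcupP [c /T_edgeP [_ _ /= vc sub_vc] xc].
have c_le : c.1 <= 2 * t by rewrite vc; apply: leq_trans le_vn; rewrite addnS ltnS leq_addr.
by rewrite c_le in sub_vc; apply: subset_trans sub_vc (IHn c _ xc); rewrite vc addSnnS.
Qed.

Lemma descendants_label_sub n (v x : V t m) :
  2 * t <= v.1 -> x \in descendants n v -> x.2 \subset v.2.
Proof.
elim: n v => [|n IHn] v /=; first by rewrite inE => _ /eqP ->.
move=> le_v /bigcupP [c /T_edgeP [_ _ /= vc sub_cv] xc].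
have c_gt : c.1 <= 2 * t = false by rewrite vc; apply/negbTE; rewrite -ltnNge ltnS.
by rewrite c_gt in sub_cv; apply: subset_trans (IHn c _ xc) sub_cv; rewrite vc leqW.
Qed.

Lemma descendants_in_tree n (v x : V t m) : in_tree v -> x \in descendants n v -> in_tree x.
Proof.
elim: n v => [|n IHn] v /=; first by rewrite inE => ? /eqP ->.
move=> _ /bigcupP [c vc]; apply: IHn; have [_ c_vertex _ _] := T_edgeP vc.
split=> //; right; apply/eqP; rewrite eqn_leq T_indeg card_gt0.
by apply/set0Pn; exists (v, c); rewrite inE vc /=.
Qed.

Lemma descendants_card_label n (v x : V t m) :
  in_tree v -> x \in descendants n v -> #|x.2| = lsize t q (v.1 + n).
Proof.
move=> v_in xv; have [/eqP -> _] := descendants_in_tree v_in xv.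
by rewrite (descendants_layer xv).
Qed.

Lemma card_descendants1 v : #|descendants 1 v| = outdegT T v.
Proof.
have -> : descendants 1 v = snd @: [set e in T | e.1 == v].
  apply/setP => x; apply/bigcupP/imsetP => [[c vc]|[[u c]]].
    by rewrite inE => /eqP ->; exists (v, c); rewrite // inE vc /=.
  by rewrite inE /= => /andP [uc /eqP uv] ->; exists c; rewrite -?uv ?inE.
rewrite card_in_imset // => -[u1 c1] [u2 c2].
by rewrite !inE /= => /andP [_ /eqP ->] /andP [_ /eqP ->] /= ->.
Qed.

End Branching.

Lemma card_le_labels t m (X : {set V t m}) (Y : {set {set 'I_m}}) :
  {in X &, forall x y, x.1 = y.1} -> {in X, forall x, x.2 \in Y} -> (#|X| <= #|Y|)%N.
Proof.
move=> same_layer labels_in; have label_inj : {in X &, injective snd}.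
  by move=> [i S] [j S'] xX yX /= eqS; have /= -> := same_layer _ _ xX yX; rewrite eqS.
rewrite -(card_in_imset label_inj); apply/subset_leq_card/subsetP => _ /imsetP [x xX ->].
exact: labels_in.
Qed.

Lemma lsize_layers t q : (0 < t)%N ->
  [/\ lsize t q t = t * q, lsize t q (2 * t) = 2 * (t * q) & lsize t q (3 * t) = t * q]%N.
Proof.
move=> t_gt0; rewrite /lsize ltnn.
have [-> ->] : (t < 2 * t)%N = true /\ (3 * t < 2 * t)%N = false by split; lia.
by split; nia.
Qed.

Section Outdegree.
Local Open Scope nat_scope.

Lemma card_supsets m (X : {set 'I_m}) k :
  #|[set S : {set 'I_m} | (X \subset S) && (#|S| == #|X| + k)]| = 'C(m - #|X|, k).
Proof.
have cardXC : #|~: X| = m - #|X| by have := cardsC X; rewrite card_ord; lia.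
rewrite -cardXC -cards_draws -(@card_in_imset _ _ (fun S => S :\: X)); last first.
  move=> S1 S2; rewrite !inE => /andP [XS1 _] /andP [XS2 _] eqD.
  by rewrite -(setID S1 X) -(setID S2 X) (setIidPr XS1) (setIidPr XS2) eqD.
apply: eq_card => D; rewrite inE; apply/imsetP/andP => [[S]|[DX /eqP cardD]].
  rewrite inE => /andP [XS /eqP cardS] ->; split; first exact: subsetDr.
  by rewrite cardsD (setIidPr XS) cardS addKn.
have DX0 : D :&: X = set0 by apply/disjoint_setI0; rewrite disjoints_subset.
exists (D :|: X); first by rewrite inE subsetUr cardsU DX0 cards0 subn0 cardD addnC /=.
by rewrite setDUl setDv setU0; apply/esym/setDidPl; rewrite disjoints_subset.
Qed.

Variables (t m q : nat).

Definition layer_outdeg (j : nat) : nat :=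
  if j.+1 <= 2 * t then 'C(m - lsize t q j, lsize t q j.+1 - lsize t q j)
  else 'C(lsize t q j, lsize t q j.+1).

Lemma Goutdeg_layer (v : V t m) :
  is_vertex q v -> v.1 < 3 * t -> Goutdeg q v = layer_outdeg v.1.
Proof.
move=> v_vertex lt_v3t; pose j1 : 'I_(3 * t).+1 := Ordinal (lt_v3t : v.1.+1 < (3 * t).+1).
pose child (S : {set 'I_m}) := (#|S| == lsize t q v.1.+1) &&
   (if v.1.+1 <= 2 * t then v.2 \subset S else S \subset v.2).
have -> : Goutdeg q v = #|[set S | child S]|.
  rewrite /Goutdeg -(@card_imset _ _ (pair j1)); last by move=> ? ? [].
  apply: eq_card => -[i S]; rewrite inE /is_edge v_vertex /=.
  apply/and3P/imsetP => [[S_vertex /eqP i_v sub]|[S' S'_child [-> ->]]].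
    by exists S; rewrite ?inE /child -?i_v ?sub ?andbT //; congr pair; apply: val_inj.
  by move: S'_child; rewrite inE /is_vertex /= => /andP [-> ->].
move/eqP: v_vertex; rewrite /layer_outdeg /child => v_size.
case: ifP => le_v2t; last by rewrite -v_size -cards_draws; apply: eq_card => S; rewrite !inE andbC.
have le_lsize : lsize t q v.1 <= lsize t q v.1.+1.
  by rewrite /lsize ifT; [case: ifP => ?; rewrite leq_mul2r; lia | lia].
rewrite -v_size -card_supsets; apply: eq_card => S; rewrite !inE andbC.
by rewrite subnKC // v_size.
Qed.

End Outdegree.

Fixpoint prod_range (i n : nat) (f : nat -> R) : R :=
  if n is n'.+1 then f i * prod_range i.+1 n' f else 1.

Lemma eq_prod_range i n f g : (forall j, (i <= j < i + n)%N -> f j = g j) ->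
  prod_range i n f = prod_range i n g.
Proof.
elim: n i => [|n IHn] i fg //=.
congr (_ * _); first by apply: fg; lia.
by apply: IHn => j ?; apply: fg; lia.
Qed.

Lemma prod_rangeD i a b f : prod_range i (a + b) f = prod_range i a f * prod_range (i + a) b f.
Proof.
elim: a i => [|a IHa] i /=; first by rewrite add0n addn0 Rmult_1_l.
by rewrite IHa addSnnS; lra.
Qed.

Lemma prod_range_scale i n c f al : al <> 0 ->
  prod_range i n (fun j => c * f j / al) = c ^ n * prod_range i n f / al ^ n.
Proof.
move=> al_neq0; elim: n i => [|n IHn] i /=; first by field.
by rewrite IHn; field; split; [exact: pow_nonzero|].
Qed.

Lemma prod_range_ge0 i n f : (forall j, 0 <= f j) -> 0 <= prod_range i n f.
Proof. by move=> f_ge0; elim: n i => [|n IHn] i /=; [lra | apply: Rmult_le_pos]. Qed.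

Lemma prod_range_gt0 i n f : (forall j, (i <= j < i + n)%N -> 0 < f j) ->
  0 < prod_range i n f.
Proof.
elim: n i => [|n IHn] i /= f_gt0; first lra.
by apply: Rmult_lt_0_compat; [|apply: IHn => j ?]; apply: f_gt0; lia.
Qed.

Lemma INR_fact_gt0 n : 0 < INR n`!.
Proof. by apply: lt_0_INR; apply/ltP; rewrite fact_gt0. Qed.

Lemma INR_bin_fact n k : (k <= n)%N -> INR 'C(n, k) * INR k`! * INR (n - k)`! = INR n`!.
Proof. by move=> le_kn; rewrite -(bin_fact le_kn) !mult_INR Rmult_assoc. Qed.

Lemma prod_range_bin_sub m q a n : ((a + n) * q <= m)%N ->
  prod_range a n (fun j => INR 'C(m - j * q, q)) * INR q`! ^ n * INR (m - (a + n) * q)`!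
  = INR (m - a * q)`!.
Proof.
elim: n a => [|n IHn] a le_m /=; first by rewrite addn0; lra.
have le_q : (q <= m - a * q)%N by lia.
have eq_sub : (m - a * q - q = m - a.+1 * q)%N by lia.
rewrite -(INR_bin_fact le_q) eq_sub -(IHn a.+1) addSnnS //; lra.
Qed.

Lemma prod_range_bin_pred q a b n : (a + n <= b)%N ->
  prod_range a n (fun j => INR 'C((b - j) * q, (b - j).-1 * q)) * INR q`! ^ n *
    INR ((b - (a + n)) * q)`!
  = INR ((b - a) * q)`!.
Proof.
elim: n a => [|n IHn] a le_b /=; first by rewrite addn0; lra.
have le_k : ((b - a).-1 * q <= (b - a) * q)%N by rewrite leq_mul2r leq_pred orbT.
have eq_k : ((b - a).-1 * q = (b - a.+1) * q)%N by congr muln; lia.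
have eq_q : ((b - a) * q - (b - a).-1 * q = q)%N by rewrite -mulnBl -[RHS]mul1n; congr muln; lia.
rewrite -(INR_bin_fact le_k) eq_q {3}eq_k -(IHn a.+1) -?addSnnS; [lra | lia].
Qed.

Lemma Rpower_inv_pow x n : 0 < x -> (0 < n)%N -> Rpower x (/ INR n) ^ n = x.
Proof.
move=> x_gt0 n_gt0; rewrite -Rpower_pow; last exact: exp_pos.
by rewrite Rpower_mult Rinv_l ?Rpower_1 //; apply: not_0_INR; lia.
Qed.

Lemma gamma_ge0 t m q j : 0 <= gamma t m q j.
Proof.
have frac_ge0 a b : 0 <= INR a / Rpower b (/ INR t).
  by apply: Rmult_le_pos; [exact: pos_INR | apply/Rlt_le/Rinv_0_lt_compat/exp_pos].
by rewrite /gamma /gam1 /gam2 /gam3; case: ifP => _; [|case: ifP => _].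
Qed.

Lemma INR_central_bin_gt0 K : 0 < INR 'C(2 * K, K).
Proof. by apply: lt_0_INR; apply/ltP; rewrite bin_gt0; lia. Qed.

Lemma gam2_pow t q : (0 < t)%N ->
  gam2 t q ^ t = INR q`! ^ t / (INR (t * q)`! * INR 'C(2 * (t * q), t * q)).
Proof.
move=> t_gt0; rewrite /gam2 /Rdiv Rpow_mult_distr pow_inv Rpower_inv_pow ?mult_INR //.
exact: Rmult_lt_0_compat (INR_fact_gt0 _) (INR_central_bin_gt0 _).
Qed.

Lemma gam3_pow t q : (0 < t)%N -> gam3 t q ^ t = INR q`! ^ t / INR (t * q)`!.
Proof.
by move=> t_gt0; rewrite /gam3 /Rdiv Rpow_mult_distr pow_inv Rpower_inv_pow //; exact: INR_fact_gt0.
Qed.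

Section LayerProducts.
Variables (t m q : nat) (alpha : R).
Hypotheses (t_gt0 : (0 < t)%N) (le_2K_m : (2 * (t * q) <= m)%N) (alpha_gt0 : 0 < alpha).

Definition layer_ratio (j : nat) : R := gamma t m q j * INR (layer_outdeg t m q j) / alpha.

Lemma layer_ratio_ge0 j : 0 <= layer_ratio j.
Proof.
apply: Rmult_le_pos; last exact/Rlt_le/Rinv_0_lt_compat.
by apply: Rmult_le_pos; [exact: gamma_ge0 | exact: pos_INR].
Qed.

Lemma layer_ratio_first j : (j < t)%N -> layer_ratio j = gam1 t m q * INR 'C(m - j * q, q) / alpha.
Proof.
move=> lt_jt; rewrite /layer_ratio /gamma lt_jt /layer_outdeg /lsize !ifT; try lia.
by rewrite mulSn addnK.
Qed.

Lemma layer_ratio_middle j : (t <= j < 2 * t)%N ->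
  layer_ratio j = gam2 t q * INR 'C(m - j * q, q) / alpha.
Proof.
move=> /andP [le_tj lt_j2t].
rewrite /layer_ratio /gamma ltnNge le_tj lt_j2t /layer_outdeg lt_j2t /lsize lt_j2t.
have -> : (if j.+1 < 2 * t then j.+1 * q else (4 * t - j.+1) * q)%N = (j.+1 * q)%N.
  by case: ltnP => // ?; congr muln; lia.
by rewrite mulSn addnK.
Qed.

Lemma layer_ratio_last j : (2 * t <= j < 3 * t)%N ->
  layer_ratio j = gam3 t q * INR 'C((4 * t - j) * q, (4 * t - j).-1 * q) / alpha.
Proof.
move=> /andP [le_2tj lt_j3t].
rewrite /layer_ratio /gamma /layer_outdeg /lsize.
have [-> -> ->] : [/\ (j < t)%N = false, (j < 2 * t)%N = false & (j.+1 < 2 * t)%N = false].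
  by split; lia.
by rewrite subnS.
Qed.

Lemma prod_layer_ratio_first_gt0 : 0 < prod_range 0 t layer_ratio.
Proof.
apply: prod_range_gt0 => j /andP [_ lt_jt]; rewrite layer_ratio_first //.
have bin_gt0 : 0 < INR 'C(m - j * q, q) by apply: lt_0_INR; apply/ltP; rewrite bin_gt0; nia.
apply: Rdiv_lt_0_compat => //; apply: Rmult_lt_0_compat => //.
exact/Rdiv_lt_0_compat/exp_pos/INR_fact_gt0.
Qed.

(* The constants gam2 and gam3 are normalised exactly so that these products of
   binomials telescope into a single binomial. *)
Lemma prod_layer_ratio_middle :
  prod_range t t layer_ratio =
  INR 'C(m - t * q, t * q) / INR 'C(2 * (t * q), t * q) / alpha ^ t.
Proof.
rewrite (@eq_prod_range _ _ _ (fun j => gam2 t q * INR 'C(m - j * q, q) / alpha)); last first.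
  by move=> j ?; apply: layer_ratio_middle; lia.
rewrite prod_range_scale ?gam2_pow //; last lra.
set P := prod_range t t _.
have := @prod_range_bin_sub m q t t; rewrite (_ : (t + t) * q = 2 * (t * q))%N; last lia.
move=> /(_ ltac:(lia)); rewrite -/P => P_eq.
have := @INR_bin_fact (m - t * q) (t * q).
rewrite (_ : m - t * q - t * q = m - 2 * (t * q))%N; last lia.
move=> /(_ ltac:(lia)) bin_eq.
have fact_K_gt0 := INR_fact_gt0 (t * q); have fact_r_gt0 := INR_fact_gt0 (m - 2 * (t * q)).
have bin_eq' : INR 'C(m - t * q, t * q) = P * INR q`! ^ t / INR (t * q)`!.
  apply: (Rmult_eq_reg_r (INR (t * q)`! * INR (m - 2 * (t * q))`!)); last first.
    exact/Rgt_not_eq/Rmult_lt_0_compat.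
  by rewrite -Rmult_assoc bin_eq -P_eq; field; lra.
have alpha_t_gt0 := pow_lt _ t alpha_gt0; have central_gt0 := INR_central_bin_gt0 (t * q).
by rewrite bin_eq'; field; repeat split; lra.
Qed.

Lemma prod_layer_ratio_last :
  prod_range (2 * t) t layer_ratio = INR 'C(2 * (t * q), t * q) / alpha ^ t.
Proof.
rewrite (@eq_prod_range _ _ _
    (fun j => gam3 t q * INR 'C((4 * t - j) * q, (4 * t - j).-1 * q) / alpha)); last first.
  by move=> j ?; apply: layer_ratio_last; lia.
rewrite prod_range_scale ?gam3_pow //; last lra.
set P := prod_range (2 * t) t _.
have := @prod_range_bin_pred q (2 * t) (4 * t) t.
have [-> ->] : (4 * t - (2 * t + t) = t /\ (4 * t - 2 * t) * q = 2 * (t * q))%N by split; nia.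
move=> /(_ ltac:(lia)); rewrite -/P => P_eq.
have := @INR_bin_fact (2 * (t * q)) (t * q); rewrite (_ : 2 * (t * q) - t * q = t * q)%N; last lia.
move=> /(_ ltac:(lia)) bin_eq.
have fact_K_gt0 := INR_fact_gt0 (t * q).
have bin_eq' : INR 'C(2 * (t * q), t * q) = P * INR q`! ^ t / INR (t * q)`!.
  apply: (Rmult_eq_reg_r (INR (t * q)`! * INR (t * q)`!)); last first.
    exact/Rgt_not_eq/Rmult_lt_0_compat.
  by rewrite -Rmult_assoc bin_eq -P_eq; field; lra.
have alpha_t_gt0 := pow_lt _ t alpha_gt0; have fact_q_t_gt0 := pow_lt _ t (INR_fact_gt0 q).
by rewrite bin_eq'; field; repeat split; lra.
Qed.

Lemma prod_layer_ratio_tail :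
  prod_range t (2 * t) layer_ratio = INR 'C(m - t * q, t * q) / alpha ^ (2 * t).
Proof.
have alpha_t_gt0 := pow_lt _ t alpha_gt0; have central_gt0 := INR_central_bin_gt0 (t * q).
have double_t : (2 * t = t + t)%N by lia.
rewrite {1}double_t prod_rangeD prod_layer_ratio_middle -double_t prod_layer_ratio_last.
by rewrite double_t pow_add; field; lra.
Qed.

End LayerProducts.

Section SubsetCounting.
Local Open Scope nat_scope.
Variable m : nat.

Lemma sum_subsets_by_card (X : {set 'I_m}) (w : nat -> nat) :
  \sum_(J : {set 'I_m} | J \subset X) w #|J| = \sum_(j < #|X|.+1) 'C(#|X|, j) * w j.
Proof.
rewrite (partition_big (fun J : {set 'I_m} => inord #|J| : 'I_#|X|.+1) xpredT) //=.
apply: eq_bigr => j _.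
rewrite (eq_bigl (fun J => J \in [set J : {set 'I_m} | J \subset X & #|J| == j])); last first.
  move=> J; rewrite inE; case: (boolP (J \subset X)) => //= JX.
  by rewrite -(inj_eq val_inj) /= inordK // ltnS subset_leq_card.
rewrite (eq_bigr (fun _ => w j)) => [|J]; last by rewrite inE => /andP [_ /eqP ->].
by rewrite sum_nat_const cards_draws mulnC.
Qed.

Lemma card_small_subsets (X : {set 'I_m}) th :
  #|[set J : {set 'I_m} | (J \subset X) && (#|J| <= th)]| * 8 ^ (#|X| - th) <= 9 ^ #|X|.
Proof.
rewrite -sum_nat_const (expnDn 8 1).
rewrite (eq_bigr (fun j : 'I_ _ => 'C(#|X|, j) * 8 ^ (#|X| - j))) => [|j _]; last first.
  by rewrite exp1n muln1.
rewrite -(sum_subsets_by_card X (fun k => 8 ^ (#|X| - k))).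
rewrite [X in X <= _]big_mkcond [X in _ <= X]big_mkcond /=; apply: leq_sum => J _.
rewrite inE; case: (J \subset X) => //=; case: ifP => // le_J_th.
by rewrite leq_pexp2l //; lia.
Qed.

Lemma card_small_meet (a b : {set 'I_m}) K th :
  a \subset b -> #|a| = K -> #|b| = 2 * K ->
  #|[set S : {set 'I_m} | [&& S \subset b, #|S| == K & #|S :&: a| <= th]]| <=
  #|[set J : {set 'I_m} | (J \subset a) && (#|J| <= th)]| *
  #|[set J : {set 'I_m} | (J \subset b :\: a) && (#|J| <= th)]|.
Proof.
move=> ab card_a card_b; rewrite -cardsX.
pose split_at_a (S : {set 'I_m}) := (S :&: a, (b :\: a) :\: S).
set small := [set S | _].
have split_inj : {in small &, injective split_at_a}.
  move=> S1 S2; rewrite !inE => /and3P [S1b _ _] /and3P [S2b _ _] [eqIa eqDb].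
  apply/setP => x; case: (boolP (x \in a)) => xa.
    by move/setP/(_ x): eqIa; rewrite !inE xa !andbT.
  case: (boolP (x \in b)) => xb.
    by move/setP/(_ x): eqDb; rewrite !inE xa xb !andbT => /negb_inj.
  by apply/idP/idP => [/(subsetP S1b)|/(subsetP S2b)]; rewrite (negbTE xb).
rewrite -(card_in_imset split_inj); apply/subset_leq_card/subsetP => p /imsetP [S].
rewrite inE => /and3P [Sb /eqP card_S small_meet] ->.
rewrite !inE subsetIr small_meet subsetDl /=.
have card_ba : #|b :\: a| = K by rewrite cardsD (setIidPr ab) card_b card_a; lia.
rewrite cardsD card_ba (_ : (b :\: a) :&: S = S :\: a); last by rewrite setIC setIDA (setIidPl Sb).
have : #|S :&: a| <= K by rewrite -card_S subset_leq_card // subsetIl.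
by rewrite cardsD card_S; lia.
Qed.

Lemma bin_shift_le N K j : j <= K -> K <= N ->
  'C(N, K - j) * (N - K + 1) ^ j <= 'C(N, K) * K ^ j.
Proof.
move=> + le_KN; elim: j => [|j IHj] lt_jK; first by rewrite !subn0.
have step : 'C(N, K - j.+1) * (N - K + 1) <= K * 'C(N, K - j).
  have := mul_bin_left N (K - j.+1); rewrite (_ : (K - j.+1).+1 = K - j); last lia.
  move=> bin_eq; apply: (@leq_trans ((K - j) * 'C(N, K - j))).
    by rewrite bin_eq mulnC leq_mul2r; apply/orP; right; lia.
  by rewrite leq_mul2r leq_subr orbT.
rewrite !expnS mulnA (leq_trans (leq_mul step (leqnn _))) // -mulnA !(mulnCA _ K) leq_mul2l.
by rewrite IHj ?orbT //; lia.
Qed.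

Lemma card_meet_fiber (a J : {set 'I_m}) K : #|a| = K ->
  #|[set S : {set 'I_m} | #|S| == K & S :&: a == J]| <= 'C(m - K, K - #|J|).
Proof.
move=> card_a; have card_aC : #|~: a| = m - K by have := cardsC a; rewrite card_ord; lia.
rewrite -card_aC -cards_draws.
set fiber := [set S | _].
have diff_inj : {in fiber &, injective (fun S => S :\: a)}.
  move=> S1 S2; rewrite !inE => /andP [_ /eqP eq1] /andP [_ /eqP eq2] eqD.
  by rewrite -(setID S1 a) -(setID S2 a) eq1 eq2 eqD.
rewrite -(card_in_imset diff_inj); apply/subset_leq_card/subsetP => D /imsetP [S].
rewrite !inE => /andP [/eqP card_S /eqP meet_S] ->.
by rewrite subsetDr cardsD card_S meet_S eqxx.
Qed.

Lemma bin_sub_le N K j e : e <= j <= K -> K <= N -> K <= N - K + 1 ->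
  'C(N, K - j) * (N - K + 1) ^ e <= 'C(N, K) * K ^ e.
Proof.
move=> /andP [le_ej le_jK] le_KN le_K_r; have := bin_shift_le le_jK le_KN.
rewrite -(subnKC le_ej) !expnD !mulnA; set d := j - e => shift.
have K_gt0 : 0 < K ^ d by rewrite expn_gt0; lia.
rewrite -(leq_pmul2r K_gt0); apply: leq_trans shift; rewrite leq_mul2l.
by case: d K_gt0 => [|d] _; rewrite ?expn0 ?leq_exp2r ?le_K_r ?orbT.
Qed.

Lemma card_large_meet (a : {set 'I_m}) K th : #|a| = K -> 3 * K <= m ->
  #|[set S : {set 'I_m} | (#|S| == K) && (th < #|S :&: a|)]| * (m - 2 * K + 1) ^ th.+1
  <= 2 ^ K * ('C(m - K, K) * K ^ th.+1).
Proof.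
move=> card_a le_3K_m; set large := [set S | _].
rewrite -sum_nat_const (partition_big (fun S => S :&: a) (fun J => J \subset a)); last first.
  by move=> S _; exact: subsetIr.
have -> : 2 ^ K = #|[pred J : {set 'I_m} | J \subset a]|.
  by rewrite -card_a -card_powerset; apply: eq_card => J; rewrite powersetE.
rewrite -sum_nat_const; apply: leq_sum => J sub_Ja; rewrite sum_nat_const.
have [lt_th_J|le_J_th] := ltnP th #|J|; last first.
  rewrite (_ : #|_| = 0) // -(card0 {set 'I_m}); apply: eq_card => S; rewrite unfold_in !inE.
  by apply/negbTE/negP => /andP [/andP [_ large_S] /eqP meet_S]; move: large_S; rewrite meet_S; lia.
have le_fiber : #|[pred S | (S \in large) && (S :&: a == J)]| <= 'C(m - K, K - #|J|).
  apply: leq_trans (card_meet_fiber J card_a); apply/subset_leq_card/subsetP => S.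
  by rewrite unfold_in !inE => /andP [/andP [-> _] ->].
apply: leq_trans (leq_mul le_fiber (leqnn _)) _.
have le_JK : #|J| <= K by rewrite -card_a subset_leq_card.
have := @bin_sub_le (m - K) K #|J| th.+1; rewrite (_ : m - K - K + 1 = m - 2 * K + 1); last lia.
by apply; rewrite ?lt_th_J ?le_JK //; lia.
Qed.

End SubsetCounting.

Lemma exp2_le_central_bin K : (2 ^ K <= 'C(2 * K, K))%N.
Proof.
elim: K => [|K IHK] //; rewrite -(@leq_pmul2l K.+1) // -mul_bin_diag.
rewrite (_ : (2 * K.+1).-1 = (2 * K).+1)%N; last lia.
apply: (@leq_trans (2 * K.+1 * 'C(2 * K, K))); last by rewrite leq_mul2l leq_bin2l ?orbT.
by rewrite expnS mulnA [(K.+1 * 2)%N]mulnC leq_mul2l IHK orbT.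
Qed.

Lemma INR_expn a n : INR (a ^ n) = INR a ^ n.
Proof. by elim: n => [|n IHn] //; rewrite expnS mult_INR IHn. Qed.

Lemma ln_le x y : 0 < x -> x <= y -> ln x <= ln y.
Proof. by move=> x_gt0 [lt_xy|->]; [apply/Rlt_le/ln_increasing | right]. Qed.

Lemma ln3_le : 8 * ln 3 <= 13 * ln 2.
Proof.
have := ln_le (pow_lt 3 8 ltac:(lra)) (_ : 3 ^ 8 <= 2 ^ 13); rewrite !ln_pow /=; lra.
Qed.

Lemma ln_9 : ln 9 = 2 * ln 3.
Proof. by rewrite (_ : 9 = 3 ^ 2) ?ln_pow /=; lra. Qed.

Lemma ln_8 : ln 8 = 3 * ln 2.
Proof. by rewrite (_ : 8 = 2 ^ 3) ?ln_pow /=; lra. Qed.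

Lemma alpha_bound_central K th t al : 0 < al -> (16 * th <= K)%N ->
  2 ^ K < 2 * (9 ^ K / 8 ^ (K - th)) ^ 2 * al ^ t ->
  (INR K / 16 - 1) * ln 2 <= INR t * ln al.
Proof.
move=> al_gt0 le_16th_K lt_2K.
have := ln_increasing _ _ (pow_lt 2 K ltac:(lra)) lt_2K.
have sub_INR : INR (K - th) = INR K - INR th by apply: minus_INR; apply/leP; lia.
rewrite /Rdiv !ln_mult ?ln_Rinv ?ln_pow ?ln_1 ?ln_9 ?ln_8 ?sub_INR.
all: try by repeat (apply: Rmult_lt_0_compat || apply: Rinv_0_lt_compat || apply: pow_lt); lra.
have le_th : 16 * INR th <= INR K.
  by have := le_INR _ _ (elimT leP le_16th_K); rewrite mult_INR /=; lra.
have := ln3_le; have := ln_lt_2; have := pos_INR K; nra.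
Qed.

Lemma alpha_bound_large_meet K th t r al : 0 < al -> (0 < K)%N -> (K < 16 * th.+1)%N ->
  (2 ^ 18 * K <= r)%N -> INR r ^ th.+1 <= 2 ^ K.+1 * al ^ (2 * t) * INR K ^ th.+1 ->
  (INR K / 16 - 1) * ln 2 <= INR t * ln al.
Proof.
move=> al_gt0 K_gt0 lt_K_th le_r.
have K_gt0R : 0 < INR K by apply/lt_0_INR/ltP.
have le_rR : 2 ^ 18 * INR K <= INR r by rewrite -[2]/(INR 2) -INR_expn -mult_INR; apply/le_INR/leP.
have ln_r : 18 * ln 2 + ln (INR K) <= ln (INR r).
  have := ln_le (Rmult_lt_0_compat _ _ (pow_lt 2 18 ltac:(lra)) K_gt0R) le_rR.
  rewrite ln_mult ?ln_pow /=; try apply: pow_lt; lra.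
have r_gt0 : 0 < INR r.
  by apply: Rlt_le_trans le_rR; apply: Rmult_lt_0_compat; [apply: pow_lt|]; lra.
move/(ln_le (pow_lt _ th.+1 r_gt0)).
rewrite ln_mult ?ln_mult; try by repeat (apply: Rmult_lt_0_compat || apply: pow_lt); lra.
rewrite !ln_pow; try lra.
have le_K_th : INR K.+1 * ln 2 <= 16 * INR th.+1 * ln 2.
  apply: Rmult_le_compat_r; first by have := ln_lt_2; lra.
  by have := le_INR _ _ (elimT leP lt_K_th); rewrite mult_INR /=; lra.
have := Rmult_le_compat_l _ _ _ (pos_INR th.+1) ln_r; rewrite mult_INR !S_INR in le_K_th *.
have := ln_lt_2; rewrite /=; lra.
Qed.

Lemma card_le_double_compl (U : finType) (S : {set U}) (P : pred U) :
  (2 * #|[set x in S | ~~ P x]| <= #|S|)%N -> (#|S| <= 2 * #|[set x in S | P x]|)%N.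
Proof.
have : (#|S| <= #|[set x in S | ~~ P x]| + #|[set x in S | P x]|)%N.
  apply: leq_trans (leq_card_setU _ _); apply/subset_leq_card/subsetP => x xS.
  by rewrite !inE xS /=; case: (P x).
lia.
Qed.

Lemma card_mul_le_sum (U : finType) (S : {set U}) (g : U -> nat) (c : R) :
  (forall w, w \in S -> c <= INR (g w)) -> INR #|S| * c <= INR (\sum_(w in S) g w).
Proof.
move=> le_cg; rewrite -sum1_card; elim/big_rec2: _ => [|w k s wS IH]; first by simpl; lra.
by rewrite !plus_INR; have := le_cg w wS; rewrite [INR 1]/=; lra.
Qed.

Lemma INR_card_small_subsets_le m (X : {set 'I_m}) K th : #|X| = K ->
  INR #|[set J : {set 'I_m} | (J \subset X) && (#|J| <= th)%N]| <= 9 ^ K / 8 ^ (K - th).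
Proof.
move=> card_X; have := le_INR _ _ (elimT leP (card_small_subsets X th)).
have [INR8 INR9] : INR 8 = 8 /\ INR 9 = 9 by split; rewrite /=; lra.
rewrite mult_INR !INR_expn card_X INR8 INR9 => le_small.
have pow8_gt0 : 0 < 8 ^ (K - th) by apply: pow_lt; lra.
by apply: (Rmult_le_reg_r _ _ _ pow8_gt0); rewrite /Rdiv Rmult_assoc Rinv_l; lra.
Qed.

Section ApproxSolution.
Variables (t m q : nat) (alpha : R) (T : {set V t m * V t m}).
Hypotheses (alpha_gt0 : 0 < alpha) (T_sol : approx_sol q alpha T).

Let T_edge : forall e, e \in T -> is_edge q e.1 e.2 := proj1 T_sol.
Let T_indeg : forall v : V t m, (indegT T v <= 1)%N := proj1 (proj2 (proj2 T_sol)).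
Local Notation desc := (descendants T).
Local Notation ratio := (layer_ratio t m q alpha).

Lemma layer_ratio_le_outdeg v : in_tree q T v -> (v.1 < 3 * t)%N -> ratio v.1 <= INR (outdegT T v).
Proof.
case: T_sol => _ [src_sol [_ other_sol]] [v_vertex v_in] lt_v3t.
rewrite /layer_ratio -(Goutdeg_layer v_vertex lt_v3t) -/(kreq q v).
have [->|v_neq_src] := eqVneq v (src t m); first exact: src_sol.
apply: other_sol => //; [by rewrite /is_sink neq_ltn lt_v3t | exact/eqP |].
by case: v_in => // /eqP; rewrite (negbTE v_neq_src).
Qed.

Lemma card_descendants_ge n v : in_tree q T v -> (v.1 + n <= 3 * t)%N ->
  prod_range v.1 n ratio <= INR #|desc n v|.
Proof.
elim: n v => [|n IHn] v v_in le_vn; first by rewrite /= cards1 /=; lra.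
have lt_v3t : (v.1 < 3 * t)%N by lia.
rewrite /= (card_descendantsD T_indeg 1 n).
have le_child w : w \in desc 1 v -> prod_range v.1.+1 n ratio <= INR #|desc n w|.
  move=> wv; have w_layer := descendants_layer T_edge wv; rewrite addn1 in w_layer.
  by rewrite -w_layer; apply: IHn; [exact: descendants_in_tree wv | lia].
apply: Rle_trans (card_mul_le_sum le_child); rewrite card_descendants1 //.
apply: Rmult_le_compat_r; last exact: layer_ratio_le_outdeg.
by apply: prod_range_ge0 => j; apply: layer_ratio_ge0.
Qed.

Hypotheses (t_gt0 : (0 < t)%N) (le_3K_m : (3 * (t * q) <= m)%N).

Let le_2K_m : (2 * (t * q) <= m)%N. Proof. lia. Qed.

Lemma src_in_tree : in_tree q T (src t m).
Proof. by split; [rewrite /is_vertex /= cards0 /lsize ifT ?mul0n; lia | left]. Qed.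

Lemma exists_middle_vertex : exists2 A : V t m, in_tree q T A & nat_of_ord A.1 = t.
Proof.
have src_layer : ((src t m).1 + t <= 3 * t)%N by rewrite /=; lia.
have := card_descendants_ge src_in_tree src_layer.
move=> /(Rlt_le_trans _ _ _ (prod_layer_ratio_first_gt0 t_gt0 le_2K_m alpha_gt0)).
move=> /(INR_lt 0) /ltP /card_gt0P [A A_below]; exists A.
  exact: descendants_in_tree src_in_tree A_below.
by rewrite (descendants_layer T_edge A_below).
Qed.

Section MiddleVertex.
Variables (A : V t m) (th : nat).
Hypotheses (A_in : in_tree q T A) (A_layer : nat_of_ord A.1 = t).

Lemma card_middle_label : #|A.2| = (t * q)%N.
Proof. by have [/eqP ->] := A_in; rewrite A_layer; case: (lsize_layers q t_gt0). Qed.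

Lemma card_sinks_below_middle_ge :
  INR 'C(m - t * q, t * q) / alpha ^ (2 * t) <= INR #|desc (2 * t) A|.
Proof.
have := card_descendants_ge (n := 2 * t) A_in.
by rewrite A_layer prod_layer_ratio_tail //; apply; lia.
Qed.

Section BelowMiddle.
Variable B : V t m.
Hypothesis B_below : B \in desc t A.

Let B_in : in_tree q T B := descendants_in_tree T_edge T_indeg A_in B_below.

Let B_layer : nat_of_ord B.1 = (2 * t)%N.
Proof. by rewrite (descendants_layer T_edge B_below) A_layer; lia. Qed.

Let middle_label_sub : A.2 \subset B.2.
Proof. by apply: (descendants_label_sup T_edge _ B_below); rewrite A_layer; lia. Qed.

Lemma card_small_meet_sinks :
  (#|[set x in desc t B | #|x.2 :&: A.2| <= th]| <=
   #|[set J : {set 'I_m} | (J \subset A.2) && (#|J| <= th)]| *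
   #|[set J : {set 'I_m} | (J \subset B.2 :\: A.2) && (#|J| <= th)]|)%N.
Proof.
have [_ lsize_2t lsize_3t] := lsize_layers q t_gt0.
have card_B : #|B.2| = (2 * (t * q))%N by have [/eqP ->] := B_in; rewrite B_layer lsize_2t.
apply: leq_trans (card_small_meet th middle_label_sub card_middle_label card_B).
apply: card_le_labels => [x y|x]; rewrite !inE => /andP [xB small_x].
  by move=> /andP [yB _]; exact: (descendants_same_layer T_edge xB yB).
rewrite small_x (descendants_label_sub T_edge _ xB) ?B_layer //=.
rewrite (descendants_card_label T_edge T_indeg B_in xB) B_layer.
by rewrite (_ : 2 * t + t = 3 * t)%N ?lsize_3t ?eqxx //; lia.
Qed.

Lemma half_sinks_large_meet :
  2 * (9 ^ (t * q) / 8 ^ (t * q - th)) ^ 2 * alpha ^ t <= INR 'C(2 * (t * q), t * q) ->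
  (2 * #|[set x in desc t B | #|x.2 :&: A.2| <= th]| <= #|desc t B|)%N.
Proof.
have card_Ba : #|B.2 :\: A.2| = (t * q)%N.
  rewrite cardsD (setIidPr middle_label_sub) card_middle_label.
  have [/eqP -> _] := B_in; rewrite B_layer; case: (lsize_layers q t_gt0) => _ -> _; lia.
have B_sinks : INR 'C(2 * (t * q), t * q) / alpha ^ t <= INR #|desc t B|.
  have := card_descendants_ge (n := t) B_in.
  by rewrite B_layer prod_layer_ratio_last //; apply; lia.
have := INR_card_small_subsets_le th card_middle_label.
have := INR_card_small_subsets_le th card_Ba.
have /leP/le_INR := card_small_meet_sinks; rewrite mult_INR.
set W := 9 ^ (t * q) / 8 ^ (t * q - th) => le_prod le_Wb le_Wa le_W2C.
have le_W2 : INR #|[set x in desc t B | #|x.2 :&: A.2| <= th]%N| <= W ^ 2.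
  by rewrite /= Rmult_1_r; apply: Rle_trans le_prod _; apply: Rmult_le_compat => //; apply: pos_INR.
have alpha_t_gt0 : 0 < alpha ^ t by apply: pow_lt.
have le_C : 2 * W ^ 2 <= INR 'C(2 * (t * q), t * q) / alpha ^ t.
  apply: (Rmult_le_reg_r _ _ _ alpha_t_gt0).
  by rewrite (_ : _ / _ * _ = INR 'C(2 * (t * q), t * q)); [lra | field; lra].
by apply/leP/INR_le; rewrite mult_INR [INR 2]/=; lra.
Qed.

End BelowMiddle.

Hypothesis few_small_meets :
  2 * (9 ^ (t * q) / 8 ^ (t * q - th)) ^ 2 * alpha ^ t <= INR 'C(2 * (t * q), t * q).

Lemma card_sinks_below_middle_le :
  (#|desc (2 * t) A| <= 2 * #|[set S : {set 'I_m} | (#|S| == t * q) && (th < #|S :&: A.2|)]|)%N.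
Proof.
pose large (x : V t m) := (th < #|x.2 :&: A.2|)%N.
have double_t : (2 * t = t + t)%N by lia.
have le_large_sinks : (#|desc (2 * t) A| <= 2 * #|[set x in desc (2 * t) A | large x]|)%N.
  rewrite double_t (card_descendantsD T_indeg) (card_descendants_predD T_indeg).
  rewrite mul2n -addnn -big_split /=; apply: leq_sum => B B_below.
  rewrite addnn -mul2n; apply: card_le_double_compl.
  rewrite (eq_card (_ : _ =i [set x in desc t B | #|x.2 :&: A.2| <= th]%N)).
    exact: half_sinks_large_meet.
  by move=> x; rewrite !inE /large -leqNgt.
apply: leq_trans le_large_sinks _; rewrite leq_mul2l; apply/orP; right.
apply: card_le_labels => [x y|x]; rewrite !inE => /andP [xA large_x].
  by move=> /andP [yA _]; exact: (descendants_same_layer T_edge xA yA).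
apply/andP; split=> //; rewrite (descendants_card_label T_edge T_indeg A_in xA) A_layer.
have [_ _ lsize_3t] := lsize_layers q t_gt0.
by rewrite (_ : t + 2 * t = 3 * t)%N ?lsize_3t //; lia.
Qed.

Lemma large_meet_pow_le :
  INR (m - 2 * (t * q) + 1) ^ th.+1 <= 2 ^ (t * q).+1 * alpha ^ (2 * t) * INR (t * q) ^ th.+1.
Proof.
have /leP/le_INR le_large := card_large_meet th card_middle_label le_3K_m.
have /leP/le_INR le_sinks := card_sinks_below_middle_le.
have := card_sinks_below_middle_ge.
have INR2 : INR 2 = 2 by rewrite /=; lra.
rewrite !mult_INR !INR_expn INR2 in le_large; rewrite mult_INR INR2 in le_sinks.
rewrite [2 ^ _.+1]/=.
set C := INR 'C(_, _) in le_large *; set r := INR _ ^ th.+1 in le_large *.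
set N := INR #|_| in le_sinks *; set G := INR #|_| in le_large le_sinks.
have C_gt0 : 0 < C by apply: lt_0_INR; apply/ltP; rewrite bin_gt0; lia.
have a_gt0 : 0 < alpha ^ (2 * t) by apply: pow_lt.
have r_ge0 : 0 <= r by apply/pow_le/pos_INR.
move=> le_C_N; have {}le_C_N : C <= alpha ^ (2 * t) * N.
  apply: (Rle_trans _ (alpha ^ (2 * t) * (C / alpha ^ (2 * t)))); first by right; field; lra.
  exact: Rmult_le_compat_l (Rlt_le _ _ a_gt0) le_C_N.
apply: (Rmult_le_reg_l _ _ _ C_gt0).
have := Rmult_le_compat_r _ _ _ r_ge0 le_C_N.
have := Rmult_le_compat_r _ _ _ r_ge0 (Rmult_le_compat_l _ _ _ (Rlt_le _ _ a_gt0) le_sinks).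
have := Rmult_le_compat_l _ _ _ (Rlt_le _ _ a_gt0) le_large.
lra.
Qed.

End MiddleVertex.

Theorem approx_sol_ln_alpha_ge : (0 < t * q)%N -> (2 ^ 18 * (t * q) <= m - 2 * (t * q) + 1)%N ->
  (INR (t * q) / 16 - 1) * ln 2 <= INR t * ln alpha.
Proof.
move=> K_gt0 le_r; have [A A_in A_layer] := exists_middle_vertex.
pose th := ((t * q) %/ 16)%N.
have [few|many] := Rle_or_lt (2 * (9 ^ (t * q) / 8 ^ (t * q - th)) ^ 2 * alpha ^ t)
                             (INR 'C(2 * (t * q), t * q)).
  apply: (@alpha_bound_large_meet _ th _ (m - 2 * (t * q) + 1)) => //.
    by rewrite /th; move: (t * q)%N => K; lia.
  exact: large_meet_pow_le A_in A_layer few.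
apply: (@alpha_bound_central _ th) => //; first by rewrite /th; move: (t * q)%N => K; lia.
apply: Rle_lt_trans many; rewrite -[2]/(INR 2) -INR_expn.
exact/le_INR/leP/exp2_le_central_bin.
Qed.

End ApproxSolution.

Lemma nverts_gt0 t m q : (0 < nverts t m q)%N.
Proof.
apply/card_gt0P; exists (src t m); rewrite inE /is_vertex /lsize /= cards0.
by case: ifP => [_|]; [rewrite mul0n | case: t].
Qed.

Lemma nverts_le t m q : (nverts t m q <= 2 ^ ((3 * t).+1 + m))%N.
Proof.
apply: leq_trans (max_card _) _; rewrite card_prod card_ord expnD leq_mul //.
  by apply: ltnW; apply: ltn_expl.
have := card_powerset [set: 'I_m]; rewrite cardsT card_ord => <-.
by apply/subset_leq_card/subsetP => S; rewrite powersetE subsetT.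
Qed.

Lemma ln_nverts_le t m q : ln (INR (nverts t m q)) <= INR ((3 * t).+1 + m) * ln 2.
Proof.
have n_gt0 : 0 < INR (nverts t m q) by apply: lt_0_INR; apply/ltP; exact: nverts_gt0.
rewrite -ln_pow; last lra.
apply: ln_le n_gt0 _; rewrite -[2]/(INR 2) -INR_expn; exact/le_INR/leP/nverts_le.
Qed.

Lemma sparse_parameters rho m K : 0 < rho -> rho * 2 ^ 21 < 1 -> rho * INR m = INR K ->
  (3 * K <= m)%N /\ (2 ^ 18 * K <= m - 2 * K + 1)%N.
Proof.
move=> rho_gt0 rho_small rho_m.
have INR_X : INR (2 ^ 18) = 2 ^ 18 by rewrite INR_expn.
have : (0 < 2 ^ 18)%N by [].
move: (2 ^ 18)%N INR_X => X INR_X X_gt0.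
suff : (X * K + 2 * K <= m)%N by split; nia.
apply/leP/INR_le; rewrite plus_INR !mult_INR INR_X -rho_m [INR 2]/=.
have := Rmult_le_compat_r _ _ _ (pos_INR m) (Rlt_le _ _ rho_small); rewrite /=; nra.
Qed.

Lemma exp_le x y : x <= y -> exp x <= exp y.
Proof. by move=> [lt_xy|->]; [apply/Rlt_le/exp_increasing | right]. Qed.

Lemma Rpower_nverts_le t m q rho alpha : (0 < t)%N -> (t <= m)%N -> 0 < alpha ->
  rho * INR m = INR (t * q) -> 24 <= INR (t * q) ->
  (INR (t * q) / 16 - 1) * ln 2 <= INR t * ln alpha ->
  Rpower (INR (nverts t m q)) (rho / 80 / INR (3 * t)) <= alpha.
Proof.
move=> t_gt0 le_tm alpha_gt0 rho_m K_ge24 le_ln_alpha.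
have t_gt0R : 0 < INR t by apply: lt_0_INR; apply/ltP.
have le_tmR : 1 <= INR t <= INR m by split; [apply: (le_INR 1) | apply: le_INR]; apply/leP; lia.
have le_ln_n : ln (INR (nverts t m q)) <= 5 * INR m * ln 2.
  apply: Rle_trans (ln_nverts_le t m q) _; apply: Rmult_le_compat_r; first by have := ln_lt_2; lra.
  by rewrite plus_INR S_INR mult_INR [INR 3]/=; lra.
rewrite /Rpower -[X in _ <= X](exp_ln _ alpha_gt0); apply: exp_le.
apply: (Rmult_le_reg_l _ _ _ t_gt0R); rewrite mult_INR [INR 3]/=.
rewrite (_ : _ * (_ * _) = rho / 240 * ln (INR (nverts t m q))); last by field; lra.
have rho_ge0 : 0 <= rho by apply: (Rmult_le_reg_r (INR m)); lra.
have := Rmult_le_compat_l _ _ _ rho_ge0 le_ln_n; have := ln_lt_2; nra.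
Qed.

Theorem lemma9 :
  exists xi : R, 0 < xi /\
  forall rho : R, 0 < rho < xi ->
  exists c : R, 0 < c /\
  forall (mseq tseq qseq : nat -> nat),
    (forall k, (0 < tseq k)%N) ->
    (forall k, rho * INR (mseq k) = INR (tseq k * qseq k)) ->
    (forall M : nat, exists K : nat, forall k, (K <= k)%N -> (M <= mseq k)%N) ->
    (forall B : R, exists K : nat, forall k, (K <= k)%N ->
        B * ln (INR (mseq k)) <= INR (mseq k) / INR (tseq k)) ->
    exists K : nat, forall k, (K <= k)%N ->
      forall (alpha : R) (T : {set V (tseq k) (mseq k) * V (tseq k) (mseq k)}),
        0 < alpha ->
        approx_sol (qseq k) alpha T ->
        Rpower (INR (nverts (tseq k) (mseq k) (qseq k))) (c / INR (3 * tseq k)) <= alpha.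
Proof.
exists (/ 2 ^ 21); split; first by apply/Rinv_0_lt_compat/pow_lt; lra.
move=> rho [rho_gt0 rho_small]; exists (rho / 80); split; first lra.
move=> mseq tseq qseq t_gt0 rho_m m_unbounded _.
have [M rho_M] := INR_archimed rho 24 rho_gt0.
have [k0 M_le_m] := m_unbounded M.
exists k0 => k le_k0k alpha T alpha_gt0 T_sol.
have K_ge24 : 24 <= INR (tseq k * qseq k).
  by rewrite -rho_m; have := le_INR _ _ (elimT leP (M_le_m k le_k0k)); nra.
have rho_small' : rho * 2 ^ 21 < 1.
  have pow21_gt0 : 0 < 2 ^ 21 by apply: pow_lt; lra.
  by rewrite -(Rinv_l (2 ^ 21)); [apply: Rmult_lt_compat_r | apply: Rgt_not_eq].
have [le_3K_m le_r] := sparse_parameters rho_gt0 rho_small' (rho_m k).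
have K_gt0 : (0 < tseq k * qseq k)%N by apply/ltP; apply: INR_lt; rewrite [INR 0]/=; lra.
have le_tm : (tseq k <= mseq k)%N.
  move: K_gt0; rewrite muln_gt0 => /andP [_ q_gt0].
  by apply: leq_trans (leq_pmulr _ q_gt0) _; lia.
apply: (Rpower_nverts_le (t_gt0 k) le_tm alpha_gt0 (rho_m k) K_ge24).
exact: approx_sol_ln_alpha_ge alpha_gt0 T_sol (t_gt0 k) le_3K_m K_gt0 le_r.
Qed.
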